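(* For positive integers $n$ and $d$, the $n^d$-grid has tree-width at least $\frac{2}{9d} \cdot n^{d-1}-1$.
   Context: The $n^d$-grid is the graph with vertex set $\{0,\dots,n-1\}^d$ in which two vertices $(x_1,\dots,x_d)$ and $(x_1',\dots,x_d')$ are adjacent if and only if $|x_1-x_1'|+\dots+|x_d-x_d'|=1$. *)

From mathcomp Require Import all_boot all_order all_algebra.
Set Implicit Arguments. Unset Strict Implicit. Unset Printing Implicit Defensive.
Import Order.TTheory GRing.Theory Num.Theory.

Definition grid_vertex (n d : nat) := {ffun 'I_d -> 'I_n}.

Definition natdist (a b : nat) : nat := (a - b) + (b - a).

Definition grid_adj (n d : nat) : rel (grid_vertex n d) :=
  fun x y => \sum_(i < d) natdist (x i) (y i) == 1.

Definition is_tree (T : finType) (e : rel T) : Prop :=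
  [/\ 0 < #|T|, symmetric e, irreflexive e,
      (forall x y : T, connect e x y) &
      (forall c : seq T, 3 <= size c -> ~~ ucycleb e c)].

Definition rel_on (T : finType) (e : rel T) (S : {set T}) : rel T :=
  fun x y => [&& e x y, x \in S & y \in S].

Definition tree_decomposition (V : finType) (adj : rel V)
    (T : finType) (e : rel T) (bag : T -> {set V}) : Prop :=
  [/\ is_tree e,
      (forall v : V, exists t : T, v \in bag t),
      (forall u v : V, adj u v -> exists t : T, (u \in bag t) && (v \in bag t)) &
      (forall v : V, forall t1 t2 : T, v \in bag t1 -> v \in bag t2 ->
          connect (rel_on e [set t | v \in bag t]) t1 t2)].

Definition td_width (V T : finType) (bag : T -> {set V}) : rat :=
  ((\max_(t : T) #|bag t|)%N)%:R - 1.

From mathcomp Require Import all_boot all_order all_algebra.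
From mathcomp Require Import zify.
Import Order.TTheory GRing.Theory Num.Theory.
Set Implicit Arguments. Unset Strict Implicit. Unset Printing Implicit Defensive.

(* A tree decomposition has a bag B that is a balanced separator: no component
   of G - B has more than half of the vertices.  Indeed, orient the tree edge
   t -> t' when the branch of T - t at t' holds a bag meeting a component of
   G - bag t with more than half of the vertices.  Heavy components of the two
   ends of an edge would meet, and the bags meeting one component of G - bag t
   all lie in one branch at t, so no edge is oriented both ways; as T has no
   cycles this orientation has a sink, whose bag is the separator.
   In the n^d-grid, join v to w by the staircase path that corrects the
   coordinates 0, 1, ..., d-1 in turn.  A staircase avoiding B joins v and w in
   G - B, which happens for at most half of the n^(2d) pairs, while a vertex of
   B lies on the k-th segment of at most n^(d+1) staircases.  So
   n^(2d) <= 2 d |B| n^(d+1), i.e. |B| >= n^(d-1) / (2d), and the width is at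
   least |B| - 1. *)

Lemma connect_subrel (T : finType) (e e' : rel T) :
  subrel e e' -> subrel (connect e) (connect e').
Proof. by move=> ee' x y; apply: connect_sub => a b /ee'; apply: connect1. Qed.

Lemma rel_on_sym (T : finType) (e : rel T) (S : {set T}) :
  symmetric e -> symmetric (rel_on e S).
Proof. by move=> e_sym x y; rewrite /rel_on e_sym (andbC (x \in S)). Qed.

Definition branch (T : finType) (e : rel T) (t t' : T) : {set T} :=
  [set s | connect (rel_on e (~: [set t])) t' s].

Lemma connect_branch (T : finType) (e : rel T) (t s : T) :
  t != s -> connect e t s -> exists2 t', e t t' & s \in branch e t t'.
Proof.
move=> ts /connectP[p p_path p_last].
case: (shortenP p_path) p_last => {p p_path}p p_path p_uniq _ p_last.
case: p p_path p_uniq p_last => [|t' q] /=; first by move=> _ _ st; rewrite st eqxx in ts.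
move=> /andP[ett' q_path] /andP[t_notin _] p_last; exists t' => //.
rewrite inE; apply/connectP; exists q => //.
apply: (sub_in_path (P := [pred y | y != t])) q_path => [a b a_t b_t eab|].
  by rewrite /rel_on eab !in_setC1; apply/and3P.
by apply/allP => y y_in; apply: contraNneq t_notin => <-.
Qed.

Section Trees.
Variables (T : finType) (e : rel T).
Hypothesis tree_e : is_tree e.

Lemma tree_edge_bridge t t' : e t t' ->
  ~~ connect [rel x y | e x y && ((x, y) != (t', t))] t' t.
Proof.
case: tree_e => _ _ e_irr _ no_cycle ett'; apply/connectP => -[p p_path p_last].
case: (shortenP p_path) p_last => {p p_path}p p_path p_uniq _ p_last.
have tt' : t' != t by apply: contraTneq ett' => ->; rewrite e_irr.
case: p p_path p_uniq p_last => [|x [|y q]] p_path p_uniq p_last.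
- by rewrite p_last eqxx in tt'.
- by move: p_path; rewrite /= p_last eqxx andbF.
apply/negP: (no_cycle [:: t', x, y & q] isT).
rewrite /ucycleb p_uniq andbT /cycle rcons_path -p_last ett' andbT.
by rewrite negbK; apply: sub_path p_path => a b /andP[].
Qed.

Lemma tree_orientation_sink (r : rel T) :
  subrel r e -> (forall x y, r x y -> ~~ r y x) -> exists t, forall t', ~~ r t t'.
Proof.
move=> r_sub r_asym.
case: (pickP [pred t | [forall t', ~~ r t t']]) => [t /forallP | no_sink].
  by exists t.
pose f t := odflt t [pick t' | r t t'].
have r_f t : r t (f t).
  rewrite /f; case: pickP => //= no_succ.
  by move: (no_sink t) => /negbT/forallPn[t' /negPn]; rewrite no_succ.
case: tree_e => /card_gt0P[t0 _] _ _ _ no_cycle.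
have [z z_cycle] : exists z, fcycle f (orbit f z).
  move: (looping_order f t0) => /trajectP[i lt_i_o iter_i].
  exists (iter i f t0); apply/(orbitPcycle 3 0); exists (order f t0 - i.+1).
  by rewrite -iterD addSn -addnS subnK.
have [short | long] := leqP (order f z) 2.
  have ffz_z : f (f z) = z.
    move: z_cycle (order_gt0 f z) short; rewrite /orbit.
    case: (order f z) => [|[|[|k]]] //=; first by move=> /andP[/eqP fz _]; rewrite !fz.
    by case/and3P=> _ /eqP.
  by move: (r_asym _ _ (r_f z)) (r_f (f z)); rewrite ffz_z => /negP.
have /negP[] : ~~ ucycleb e (orbit f z) by apply: no_cycle; rewrite size_orbit.
rewrite /ucycleb orbit_uniq andbT.
by apply: sub_cycle z_cycle => a b /eqP <-; apply: r_sub.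
Qed.

Lemma tree_branches_disjoint t t' s :
  e t t' -> s \in branch e t t' -> s \in branch e t' t -> False.
Proof.
move=> ett'; rewrite !inE => from_t' from_t.
have e_sym : symmetric e by case: tree_e.
rewrite (sym_connect_sym (rel_on_sym _ e_sym)) in from_t.
have /negP[] := tree_edge_bridge ett'; apply: connect_trans.
  apply: connect_subrel from_t' => a b /and3P[eab _]; rewrite !inE => b_t.
  by rewrite /= eab; apply: contraNneq b_t => -[_ ->].
apply: connect_subrel from_t => a b /and3P[eab]; rewrite !inE => a_t' _.
by rewrite /= eab; apply: contraNneq a_t' => -[->].
Qed.

End Trees.

Definition component_avoiding (V : finType) (adj : rel V) (B : {set V}) (v : V) :=
  [set w | connect (rel_on adj (~: B)) v w].

Definition balanced_separator (V : finType) (adj : rel V) (B : {set V}) :=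
  forall v, v \notin B -> 2 * #|component_avoiding adj B v| <= #|V|.

Section TreeDecomposition.
Variables (V T : finType) (adj : rel V) (e : rel T) (bag : T -> {set V}).
Hypothesis td : tree_decomposition adj e bag.

Lemma bags_in_branch t t' u s1 s2 : u \notin bag t ->
  u \in bag s1 -> u \in bag s2 -> s1 \in branch e t t' -> s2 \in branch e t t'.
Proof.
case: td => _ _ _ bags_connected u_t u_s1 u_s2; rewrite !inE => s1_branch.
apply: connect_trans s1_branch (connect_subrel _ (bags_connected u s1 s2 u_s1 u_s2)).
move=> a b /and3P[eab]; rewrite !inE => u_a u_b.
by rewrite /rel_on eab !inE /=; apply/andP; split; apply: contraNneq u_t => <-.
Qed.

Lemma component_bags_in_branch t t' v w s1 s2 : v \notin bag t ->
  w \in component_avoiding adj (bag t) v ->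
  v \in bag s1 -> s1 \in branch e t t' -> w \in bag s2 -> s2 \in branch e t t'.
Proof.
case: td => _ _ edges_covered _ v_t; rewrite inE => /connectP[p].
elim: p v s1 v_t => [|x p IHp] v s1 v_t /=.
  by move=> _ -> v_s1 s1_branch w_s2; apply: bags_in_branch w_s2 s1_branch.
move=> /andP[/and3P[avx _ x_t] p_path] w_last v_s1 s1_branch.
have [s /andP[v_s x_s]] := edges_covered v x avx.
rewrite inE in x_t; apply: IHp x_t p_path w_last x_s _.
exact: bags_in_branch v_t v_s1 v_s s1_branch.
Qed.

Definition heavy_branch t t' := e t t' && [exists v, [&& v \notin bag t,
  #|V| < 2 * #|component_avoiding adj (bag t) v| &
  [exists s, (v \in bag s) && (s \in branch e t t')]]].

Lemma heavy_branch_asym t t' : heavy_branch t t' -> ~~ heavy_branch t' t.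
Proof.
move=> /andP[ett' /existsP[v /and3P[v_t big_v /existsP[s /andP[v_s s_branch]]]]].
apply/negP=> /andP[_ /existsP[v' /and3P[v'_t' big_v' /existsP[s' /andP[v'_s' s'_branch]]]]].
set C := component_avoiding adj (bag t) v in big_v.
set C' := component_avoiding adj (bag t') v' in big_v'.
have [w] : exists w, w \in C :&: C'.
  apply/set0Pn; rewrite -card_gt0.
  have := cardsUI C C'; have := max_card (C :|: C'); lia.
rewrite inE => /andP[w_C w_C'].
case: (td) => tree_e covered _ _; have [r w_r] := covered w.
apply: (tree_branches_disjoint tree_e ett').
  exact: component_bags_in_branch v_t w_C v_s s_branch w_r.
exact: component_bags_in_branch v'_t' w_C' v'_s' s'_branch w_r.
Qed.

Lemma td_balanced_separator : exists t, balanced_separator adj (bag t).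
Proof.
case: (td) => tree_e covered _ _.
have [t no_heavy] : exists t, forall t', ~~ heavy_branch t t'.
  by apply: (tree_orientation_sink tree_e _ (@heavy_branch_asym)) => a b /andP[].
exists t => v v_t; rewrite leqNgt; apply/negP => big_v.
have [s v_s] := covered v.
have ts : t != s by apply: contraNneq v_t => ->.
case: (tree_e) => _ _ _ connected _.
have [t' ett' s_branch] := connect_branch ts (connected t s).
have /negP[] := no_heavy t'; rewrite /heavy_branch ett' /=.
by apply/existsP; exists v; rewrite v_t big_v /=; apply/existsP; exists s; rewrite v_s.
Qed.

End TreeDecomposition.

Lemma connect_chain (T : finType) (r : rel T) (g : nat -> T) (i j : nat) :
  i <= j -> (forall m, i <= m < j -> r (g m) (g m.+1)) -> connect r (g i) (g j).
Proof.
elim: j => [|j IHj]; first by rewrite leqn0 => /eqP ->.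
rewrite leq_eqVlt => /predU1P[-> //|lt_i_j1] r_chain.
apply: connect_trans (IHj lt_i_j1 _) (connect1 (r_chain j _)) => [m /andP[i_m m_j]|].
  by apply: r_chain; rewrite i_m ltnW.
by rewrite -ltnS lt_i_j1 /=.
Qed.

Lemma leq_card_bigcup (T I : finType) (P : pred I) (F : I -> {set T}) :
  #|\bigcup_(i | P i) F i| <= \sum_(i | P i) #|F i|.
Proof.
elim/big_rec2: _ => [|i m A _ le_A_m]; first by rewrite cards0.
by apply: leq_trans (leq_card_setU _ _).1 _; rewrite leq_add2l.
Qed.

Section GridSeparators.
Variables (n d : nat).
Local Notation vertex := (grid_vertex n d).
Local Notation grid := (@grid_adj n d).

Lemma grid_adj_sym : symmetric grid.
Proof. by move=> x y; rewrite /grid_adj; under eq_bigr do rewrite /natdist addnC. Qed.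

Definition set_coord (x : vertex) (k : 'I_d) (m : 'I_n) : vertex :=
  [ffun i => if i == k then m else x i].

Definition stair (k : nat) (v w : vertex) : vertex :=
  [ffun i : 'I_d => if i < k then w i else v i].

Definition stair_segment (k : 'I_d) (v w : vertex) : {set vertex} :=
  [set u : vertex | [forall i, (i != k) ==> (u i == stair k v w i)]].

Lemma stair0 v w : stair 0 v w = v.
Proof. by apply/ffunP => i; rewrite ffunE. Qed.

Lemma stair_dim v w : stair d v w = w.
Proof. by apply/ffunP => i; rewrite ffunE ltn_ord. Qed.

Lemma set_coord_in_segment (k : 'I_d) v w m :
  set_coord (stair k v w) k m \in stair_segment k v w.
Proof.
by rewrite inE; apply/forallP => i; apply/implyP => /negbTE ik; rewrite ffunE ik.
Qed.

Lemma stair_set_coord (k : 'I_d) v w :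
  stair k v w = set_coord (stair k v w) k (v k) /\
  stair k.+1 v w = set_coord (stair k v w) k (w k).
Proof.
split; apply/ffunP => i; rewrite !ffunE ?ltnS; case: eqP => [-> | /eqP ik].
- by rewrite ltnn.
- by [].
- by rewrite leqnn.
- by rewrite leq_eqVlt (inj_eq (@ord_inj d)) (negbTE ik).
Qed.

Variable B : {set vertex}.
Local Notation avoid := (rel_on grid (~: B)).

Lemma avoid_sym : symmetric avoid.
Proof. exact: rel_on_sym grid_adj_sym. Qed.

Lemma connect_coord_line x k (a b : 'I_n) :
  (forall m, set_coord x k m \notin B) ->
  connect avoid (set_coord x k a) (set_coord x k b).
Proof.
move=> line_B; wlog le_a_b : a b / a <= b.
  move=> wlog_le; case: (leqP a b) => [|/ltnW]; first exact: wlog_le.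
  by move/wlog_le; rewrite (sym_connect_sym avoid_sym).
pose g m := set_coord x k (insubd a m).
have [ga gb] : set_coord x k a = g a /\ set_coord x k b = g b by rewrite /g !valKd.
rewrite ga gb; apply: (@connect_chain _ _ g _ _ le_a_b) => m /andP[_ lt_m_b].
have lt_m1_n : m.+1 < n by apply: leq_trans (ltn_ord b).
rewrite /rel_on !inE !line_B /= !andbT /grid_adj (bigD1 k) //= !ffunE eqxx.
have val_g j : j < n -> val (insubd a j) = j by move=> lt_j_n; rewrite insubdK.
rewrite !val_g ?(ltnW lt_m1_n) // /natdist subSnn (eqP (leqnSn m)).
by rewrite big1 // => i /negbTE ik; rewrite !ffunE ik subnn.
Qed.

Definition stairs_avoid (v w : vertex) := [forall k, [disjoint stair_segment k v w & B]].

Lemma connect_stairs v w : stairs_avoid v w -> connect avoid v w.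
Proof.
move=> /forallP segments_B.
have stairs_connected k : k <= d -> connect avoid v (stair k v w).
  elim: k => [_|k IHk lt_k_d]; first by rewrite stair0.
  apply: connect_trans (IHk (ltnW lt_k_d)) _.
  have [stair_k stair_k1] := stair_set_coord (Ordinal lt_k_d) v w.
  rewrite stair_k1 {1}stair_k.
  apply: connect_coord_line => m.
  by rewrite (disjointFr (segments_B _) (set_coord_in_segment _ _ _ _)).
by rewrite -(stair_dim v w); apply: stairs_connected.
Qed.

Lemma card_segment_pairs (k : 'I_d) (b : vertex) :
  #|[set p : vertex * vertex | b \in stair_segment k p.1 p.2]| <= n ^ d.+1.
Proof.
(* b fixes v beyond coordinate k and w below it; code records the rest. *)
pose code (p : vertex * vertex) := (p.1 k, stair k p.2 p.1).
pose decode (c : 'I_n * vertex) : vertex * vertex :=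
  ([ffun i : 'I_d => if i < k then c.2 i else if i == k then c.1 else b i],
   [ffun i : 'I_d => if i < k then b i else c.2 i]).
have code_inj : {in [set p | b \in stair_segment k p.1 p.2] &, injective code}.
  apply: (can_in_inj (g := decode)) => -[v w]; rewrite !inE /= => /forallP b_seg.
  congr pair; apply/ffunP => i; rewrite !ffunE /=;
    have [lt_i_k | le_k_i] := ltnP i k => //.
  - case: (i =P k) => [-> // | /eqP ik].
    by move: (b_seg i); rewrite ik ffunE ltnNge le_k_i => /eqP.
  - have ik : i != k by rewrite neq_ltn lt_i_k.
    by move: (b_seg i); rewrite ik ffunE lt_i_k => /eqP.
apply: leq_trans (leq_card_in _ _ code_inj) _.
by rewrite card_prod card_ffun !card_ord expnS.
Qed.

Lemma card_blocked_pairs :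
  #|[set p : vertex * vertex | ~~ stairs_avoid p.1 p.2]| <= d * (#|B| * n ^ d.+1).
Proof.
pose through k b := [set p : vertex * vertex | b \in stair_segment k p.1 p.2].
apply: (@leq_trans #|\bigcup_(k < d) \bigcup_(b in B) through k b|).
  apply: subset_leq_card; apply/subsetP => p; rewrite inE.
  move=> /forallPn[k /pred0Pn[b /andP[b_seg b_B]]].
  by apply/bigcupP; exists k => //; apply/bigcupP; exists b => //; rewrite inE.
apply: leq_trans (leq_card_bigcup _ _) _.
apply: (@leq_trans (\sum_(k < d) #|B| * n ^ d.+1)); last by rewrite sum_nat_const card_ord.
apply: leq_sum => k _.
apply: leq_trans (leq_card_bigcup _ _) _.
rewrite -sum_nat_const; apply: leq_sum => b _; exact: card_segment_pairs.
Qed.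

Lemma card_connected_pairs : balanced_separator grid B ->
  2 * #|[set p : vertex * vertex | (p.1 \notin B) && connect avoid p.1 p.2]|
    <= #|vertex| * #|vertex|.
Proof.
move=> balanced.
pose pairs_from v := setX [set v] (component_avoiding grid B v).
apply: (@leq_trans (2 * \sum_(v | v \notin B) #|pairs_from v|)).
  rewrite leq_mul2l /=; apply: leq_trans (leq_card_bigcup _ _).
  apply: subset_leq_card; apply/subsetP => -[v w]; rewrite inE /= => /andP[v_B vw].
  by apply/bigcupP; exists v => //; rewrite !inE eqxx.
rewrite big_distrr /= (@leq_trans (\sum_(v | v \notin B) #|vertex|)) //.
  by apply: leq_sum => v v_B; rewrite cardsX cards1 mul1n balanced.
by rewrite sum_nat_const leq_mul2r max_card orbT.
Qed.

Lemma balanced_separator_grid_card : 0 < n -> 0 < d ->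
  balanced_separator grid B -> n ^ d.-1 <= 2 * d * #|B|.
Proof.
move=> n_gt0 d_gt0 balanced.
have card_vertex : #|vertex| = n ^ d by rewrite card_ffun !card_ord.
set good := [set p : vertex * vertex | stairs_avoid p.1 p.2].
have good_connected :
    #|good| <= #|[set p : vertex * vertex | (p.1 \notin B) && connect avoid p.1 p.2]|.
  apply: subset_leq_card; apply/subsetP => -[v w]; rewrite !inE /= => vw_avoid.
  rewrite connect_stairs // andbT; pose k0 := Ordinal d_gt0.
  have v_seg : v \in stair_segment k0 v w.
    by rewrite -{1}(stair0 v w) {1}(stair_set_coord k0 v w).1 set_coord_in_segment.
  by rewrite (disjointFr (forallP vw_avoid k0) v_seg).
have good_blocked : #|good| + #|[set p : vertex * vertex | ~~ stairs_avoid p.1 p.2]|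
    = n ^ d * n ^ d.
  have := cardsC good; rewrite card_prod card_vertex => <-.
  by congr (_ + _); apply: eq_card => p; rewrite !inE.
have := card_connected_pairs balanced; have := card_blocked_pairs.
rewrite card_vertex => blocked connected.
have : n ^ d * n ^ d <= 2 * d * #|B| * n ^ d.+1 by lia.
have -> : n ^ d * n ^ d = n ^ d.-1 * n ^ d.+1 by rewrite -!expnD; congr (_ ^ _); lia.
by rewrite leq_pmul2r // expn_gt0 n_gt0.
Qed.

End GridSeparators.

Unset Implicit Arguments.
Local Open Scope ring_scope.

Theorem lemma13 (n d : nat) (hn : (0 < n)%N) (hd : (0 < d)%N)
    (T : finType) (e : rel T) (bag : T -> {set grid_vertex n d}) :
  tree_decomposition (@grid_adj n d) e bag ->
  2%:R / (9 * d)%:R * (n ^ (d - 1))%:R - 1 <= td_width bag.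
Proof.
move=> td; have [t balanced] := td_balanced_separator td.
have grid_bound := balanced_separator_grid_card hn hd balanced.
have bag_le_max : (#|bag t| <= \max_s #|bag s|)%N by apply: leq_bigmax_cond.
rewrite /td_width lerD2r mulrC mulrA ler_pdivrMr ?ltr0n ?muln_gt0 ?hd //.
rewrite -!natrM ler_nat subn1; nia.
Qed.
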